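(* Let $X$ be a random covariate vector with values in $\mathcal{X}$, $r\colon\mathcal{X}\to\{0,1\}$ a deterministic map, $A\in\{0,1\}$ and $S^\ast\in\{0,1\}$ random variables, and $Y^{a=0},Y^{a=1}$ integrable real-valued potential outcomes. Define $$A^\ast=S^\ast r(X)+(1-S^\ast)A,\quad Y^\ast=A^\ast Y^{a=1}+(1-A^\ast)Y^{a=0},$$ $$Y^{s=0}=AY^{a=1}+(1-A)Y^{a=0},\quad Y^{s=1}=r(X)Y^{a=1}+\{1-r(X)\}Y^{a=0}.$$ Assume $\{Y^{a=1},Y^{a=0}\}\perp\!\!\!\perp A\mid X$, $\{Y^{a=1},Y^{a=0}\}\perp\!\!\!\perp A^\ast\mid X$, $A\perp\!\!\!\perp S^\ast\mid X$, and $0<\pi(x)<1$, $0<\pi^\ast(x)<1$ for all $x\in\mathcal{X}$, where $\pi(x)=\mathbb{E}[A\mid X=x]$, $\pi^\ast(x)=\mathbb{E}[A^\ast\mid X=x]$. Let $\rho^\ast(x)=\mathbb{E}[S^\ast\mid X=x]$ and $\tau(x)=\mathbb{E}[Y^{a=1}-Y^{a=0}\mid X=x]$. Then the average implementation effect $\Lambda(r,\rho^\ast)=\mathbb{E}[Y^\ast-Y^{s=0}]$ and the maximal implementation gain $\Gamma(r,\rho^\ast)=\mathbb{E}[Y^{s=1}-Y^\ast]$ satisfy $$\Lambda(r,\rho^\ast)=\mathbb{E}\big[\{\pi^\ast(X)-\pi(X)\}\tau(X)\big]=\mathbb{E}\big[\rho^\ast(X)\{r(X)-\pi(X)\}\tau(X)\big],$$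 $$\Gamma(r,\rho^\ast)=\mathbb{E}\big[\{r(X)-\pi^\ast(X)\}\tau(X)\big]=\mathbb{E}\big[\{1-\rho^\ast(X)\}\{r(X)-\pi(X)\}\tau(X)\big].$$
   Context: This is the ''new ITR'' setting: $A$ is the treatment under usual care without the rule; $S^\ast$ indicates a (future) stochastic implementation of the rule $r$ with implementation function $\rho^\ast$; $A^\ast$ and $Y^\ast$ are the treatment and outcome under that partial implementation; $Y^{s=1}$ is the outcome if the rule were always followed and $Y^{s=0}$ the outcome under usual care. *)

From HB Require Import structures.
From mathcomp Require Import all_boot all_order all_algebra.
From mathcomp Require Import all_classical all_reals all_analysis.
Set Implicit Arguments. Unset Strict Implicit. Unset Printing Implicit Defensive.
Import Order.TTheory GRing.Theory Num.Theory.
Local Open Scope classical_set_scope.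
Local Open Scope ring_scope.

Section Defs.
Context (R : realType) (d : measure_display) (Omega : measurableType d)
  (P : probability Omega R) (dX : measure_display) (Xs : measurableType dX)
  (X : Omega -> Xs).

Definition cond_exp_version (Z : Omega -> R) (g : Xs -> R) : Prop :=
  measurable_fun setT g /\
  P.-integrable setT (EFin \o (g \o X)) /\
  forall D : set Xs, measurable D ->
    (\int[P]_(w in X @^-1` D) (Z w)%:E = \int[P]_(w in X @^-1` D) (g (X w))%:E)%E.

Definition cond_indep (d1 d2 : measure_display) (T1 : measurableType d1)
  (T2 : measurableType d2) (U : Omega -> T1) (V : Omega -> T2) : Prop :=
  forall (B : set T1) (C : set T2), measurable B -> measurable C ->
    exists gU gV : Xs -> R,
      cond_exp_version (\1_(U @^-1` B)) gU /\
      cond_exp_version (\1_(V @^-1` C)) gV /\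
      forall D : set Xs, measurable D ->
        P (U @^-1` B `&` V @^-1` C `&` X @^-1` D) =
        (\int[P]_(w in X @^-1` D) (gU (X w) * gV (X w))%:E)%E.
End Defs.

Definition Astar (R : realType) (Omega Xs : Type) (X : Omega -> Xs)
  (r : Xs -> R) (S A : Omega -> R) : Omega -> R :=
  fun w => S w * r (X w) + (1 - S w) * A w.

Definition outcome (R : realType) (Omega : Type) (T Y1 Y0 : Omega -> R)
  : Omega -> R :=
  fun w => T w * Y1 w + (1 - T w) * Y0 w.

From HB Require Import structures.
From mathcomp Require Import all_boot all_order all_algebra.
From mathcomp Require Import all_classical all_reals all_analysis.
From mathcomp Require Import measurable_realfun ring.
Set Implicit Arguments. Unset Strict Implicit. Unset Printing Implicit Defensive.
Import Order.TTheory GRing.Theory Num.Theory.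
Import numFieldNormedType.Exports.
Import HBNNSimple.
Local Open Scope classical_set_scope.
Local Open Scope ring_scope.

(* Write Y* - Y^{s=0} = (A* - A)(Y1 - Y0) and
   Y^{s=1} - Y* = (r(X) - A* )(Y1 - Y0).
   For a 0/1 treatment T with (Y1, Y0) independent of T given X and propensity
   p, E[T (Y1 - Y0)] = E[p(X) (Y1 - Y0)] = E[p(X) tau(X)].  Both steps are
   instances of one fact: if F and G have the same integral over every event
   {V in B}, then E[phi(V) F] = E[phi(V) G] for every measurable phi (pass from
   indicators to simple functions, to nonnegative phi by dominated convergence,
   then to phi = phi^+ - phi^-).  Finally A independent of S given X gives
   E[A* | X] = rho* r + pi - rho* pi, so pi* = pi + rho* (r - pi) almost surely
   along X, which yields the second forms. *)

Definition zero_one (R : realType) (T : Type) (f : T -> R) :=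
  forall x, f x = 0 \/ f x = 1.

Section zero_one.
Context (R : realType) (T : Type) (f : T -> R).
Hypothesis f01 : zero_one f.

Lemma zero_one_normr_le1 x : `|f x| <= 1.
Proof. by case: (f01 x) => ->; rewrite ?normr0 ?normr1. Qed.

Lemma indic_preimage1 : \1_(f @^-1` [set 1]) = f.
Proof.
apply/funext => x; rewrite indicE; case: (f01 x) => fx; rewrite fx.
  by rewrite memNset //= fx => /eqP; rewrite eq_sym oner_eq0.
by rewrite mem_set.
Qed.

End zero_one.

Lemma open_unit_normr_le1 (R : realType) (T : Type) (f : T -> R) :
  (forall x, 0 < f x < 1) -> forall x, `|f x| <= 1.
Proof. by move=> f01 x; have /andP[f0 f1] := f01 x; rewrite ger0_norm ?ltW. Qed.

Section integral_comp.
Context (R : realType) (d : measure_display) (Omega : measurableType d)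
  (mu : measure Omega R) (d' : measure_display) (T : measurableType d')
  (V : Omega -> T).
Hypothesis mV : measurable_fun setT V.

Lemma measurable_preimage B : measurable B -> measurable (V @^-1` B).
Proof. by move=> mB; rewrite -[_ @^-1` _]setTI; exact: mV. Qed.

Lemma integral_indic_comp (H : Omega -> R) B : measurable B ->
  (\int[mu]_w (\1_B (V w) * H w)%:E = \int[mu]_(w in V @^-1` B) (H w)%:E)%E.
Proof.
move=> mB; rewrite [RHS]integral_mkcond; apply: eq_integral => w _.
rewrite /patch indicE; have [VBw|VBw] := boolP (V w \in B).
  by rewrite mem_set ?mul1r //; exact: set_mem.
by rewrite memNset ?mul0r // => /mem_set; exact/negP.
Qed.

Lemma integrable_bddM (h H : Omega -> R) M : measurable_fun setT h ->
  (forall w, `|h w| <= M) -> mu.-integrable setT (EFin \o H) ->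
  mu.-integrable setT (fun w => (h w * H w)%:E).
Proof.
move=> mh hM iH; apply: (integrableMr measurableT mh _ iH).
exists M; split; first exact: num_real.
by move=> x Mx w _; exact: le_trans (hM w) (ltW Mx).
Qed.

Lemma integrable_indic_compM (H : Omega -> R) B : measurable B ->
  mu.-integrable setT (EFin \o H) ->
  mu.-integrable setT (fun w => (\1_B (V w) * H w)%:E).
Proof.
move=> mB; apply: (integrable_bddM (M := 1)).
  exact: measurableT_comp (measurable_indic mB) mV.
by move=> w; rewrite indicE; case: (_ \in _); rewrite ?normr1 ?normr0.
Qed.

Section eq_integral_comp.
Variables F G : Omega -> R.
Hypotheses (mF : measurable_fun setT F) (mG : measurable_fun setT G).
Hypotheses (iF : mu.-integrable setT (EFin \o F))
           (iG : mu.-integrable setT (EFin \o G)).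
Hypothesis FG : forall B, measurable B ->
  (\int[mu]_(w in V @^-1` B) (F w)%:E = \int[mu]_(w in V @^-1` B) (G w)%:E)%E.

Lemma eq_integral_nnsfun_comp (s : {nnsfun T >-> R}) :
  (\int[mu]_w (s (V w) * F w)%:E = \int[mu]_w (s (V w) * G w)%:E)%E.
Proof.
pose ys := finmap.enum_fset (fset_set (range s)).
have sE H w : (s (V w) * H w)%:E =
    (\sum_(y <- ys) y%:E * (\1_(s @^-1` [set y]) (V w) * H w)%:E)%E.
  rewrite fimfunE fsbig_finite; last exact: fimfunP.
  rewrite big_distrl /= sumEFin; congr (_%:E); apply: eq_bigr => y _.
  by rewrite mulrA.
have msy y : measurable (s @^-1` [set y]) by exact: measurable_funPTI.
have iy H y : mu.-integrable setT (EFin \o H) -> mu.-integrable setT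
    (fun w => (y%:E * (\1_(s @^-1` [set y]) (V w) * H w)%:E)%E).
  by move=> iH; apply: integrableZl => //; exact: integrable_indic_compM.
under eq_integral do rewrite sE; under [RHS]eq_integral do rewrite sE.
rewrite !integral_sum //; [|by move=> y; exact: iy..].
apply: eq_bigr => y _.
rewrite !integralZl //; [|exact: integrable_indic_compM..].
by rewrite !integral_indic_comp // FG.
Qed.

Section nonneg.
Variable phi : T -> R.
Hypotheses (mphi : measurable_fun setT phi) (phi_ge0 : forall x, 0 <= phi x).

Let mEphi : measurable_fun setT (EFin \o phi).
Proof. exact/measurable_EFinP. Qed.

Let s_ := nnsfun_approx measurableT mEphi.

Let s_le n x : s_ n x <= phi x.
Proof.
rewrite /s_ (nnsfun_approxE measurableT mEphi n) -lee_fin.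
by apply: (le_approx n (f := EFin \o phi)) => // y _; rewrite lee_fin.
Qed.

Let s_cvg x : s_ n x @[n --> \oo] --> phi x.
Proof.
have -> : (fun n => s_ n x) = (fun n => approx setT (EFin \o phi) n x).
  by apply/funext => n; rewrite /s_ (nnsfun_approxE measurableT mEphi n).
apply: (cvg_approx (f := EFin \o phi)) => //; last exact: ltry.
by move=> y _; rewrite lee_fin.
Qed.

Let cvg_integral_approx (H : Omega -> R) : measurable_fun setT H ->
  mu.-integrable setT (fun w => (phi (V w) * H w)%:E) ->
  (\int[mu]_w (s_ n (V w) * H w)%:E)%E @[n --> \oo] -->
  (\int[mu]_w (phi (V w) * H w)%:E)%E.
Proof.
move=> mH iH.
apply: (dominated_cvg measurableT (g := fun w => `|phi (V w) * H w|%:E)) => //.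
- move=> n; apply/measurable_EFinP; apply: measurable_funM => //.
  exact: measurableT_comp mV.
- move=> w _; apply: cvg_EFin; first exact: nearW.
  by apply: cvgM => //; exact: cvg_cst.
- exact: integrable_abse iH.
- move=> n w _; rewrite /= lee_fin !normrM ler_wpM2r //.
  by rewrite !ger0_norm ?s_le // (le_trans _ (s_le n (V w))).
Qed.

Lemma eq_integral_nonneg_comp :
  mu.-integrable setT (fun w => (phi (V w) * F w)%:E) ->
  mu.-integrable setT (fun w => (phi (V w) * G w)%:E) ->
  (\int[mu]_w (phi (V w) * F w)%:E = \int[mu]_w (phi (V w) * G w)%:E)%E.
Proof.
move=> iphiF iphiG.
have cvgF := cvg_integral_approx mF iphiF.
have sFG : (fun n => \int[mu]_w (s_ n (V w) * F w)%:E)%E =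
    (fun n => \int[mu]_w (s_ n (V w) * G w)%:E)%E.
  by apply/funext => n; exact: eq_integral_nnsfun_comp.
rewrite sFG in cvgF.
exact: cvg_unique cvgF (cvg_integral_approx mG iphiG).
Qed.

End nonneg.

Lemma eq_integral_comp (phi : T -> R) : measurable_fun setT phi ->
  mu.-integrable setT (fun w => (phi (V w) * F w)%:E) ->
  mu.-integrable setT (fun w => (phi (V w) * G w)%:E) ->
  (\int[mu]_w (phi (V w) * F w)%:E = \int[mu]_w (phi (V w) * G w)%:E)%E.
Proof.
move=> mphi iphiF iphiG.
have dominated (psi : T -> R) H : measurable_fun setT psi ->
    measurable_fun setT H -> (forall x, `|psi x| <= `|phi x|) ->
    mu.-integrable setT (fun w => (phi (V w) * H w)%:E) ->
    mu.-integrable setT (fun w => (psi (V w) * H w)%:E).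
  move=> mpsi mH psi_le iH; apply: le_integrable iH => //.
    apply/measurable_EFinP; apply: measurable_funM => //.
    exact: measurableT_comp mV.
  by move=> w _ /=; rewrite lee_fin !normrM ler_wpM2r.
have pos_le x : `|phi^\+ x| <= `|phi x|.
  by rewrite /funrpos; case: (leP (phi x) 0); rewrite ?normr0.
have neg_le x : `|phi^\- x| <= `|phi x|.
  by rewrite /funrneg; case: (leP (- phi x) 0); rewrite ?normr0 ?normrN.
have mpos := measurable_funrpos mphi; have mneg := measurable_funrneg mphi.
have phiE H w : (phi (V w) * H w)%:E =
    ((phi^\+ (V w) * H w)%:E - (phi^\- (V w) * H w)%:E)%E.
  by rewrite -EFinB -mulrBl -[in LHS](funrposBneg phi).
under eq_integral do rewrite phiE; under [RHS]eq_integral do rewrite phiE.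
rewrite !integralB_EFin //; [|exact: dominated..].
by rewrite !eq_integral_nonneg_comp //; exact: dominated.
Qed.

End eq_integral_comp.
End integral_comp.

Section cond_exp_version.
Context (R : realType) (d : measure_display) (Omega : measurableType d)
  (P : probability Omega R) (dX : measure_display) (Xs : measurableType dX)
  (X : Omega -> Xs).
Hypothesis mX : measurable_fun setT X.

Lemma integrable_bdd (f : Omega -> R) M : measurable_fun setT f ->
  (forall w, `|f w| <= M) -> P.-integrable setT (EFin \o f).
Proof.
move=> mf fM.
have := integrable_bddM mf fM (finite_measure_integrable_cst P 1 measurableT).
by apply: eq_integrable => // w _ /=; rewrite mulr1.
Qed.

Lemma ae_eq_integral_comp (E : set Omega) (f g : Xs -> R) : measurable E ->
  measurable_fun setT f -> measurable_fun setT g ->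
  {ae P, forall w, f (X w) = g (X w)} ->
  (\int[P]_(w in E) (f (X w))%:E = \int[P]_(w in E) (g (X w))%:E)%E.
Proof.
move=> mE mf mg fg; apply: ae_eq_integral => //.
- by apply/measurable_EFinP; apply: measurable_funS (measurableT_comp mf mX).
- by apply/measurable_EFinP; apply: measurable_funS (measurableT_comp mg mX).
- by apply: filterS fg => w -> _.
Qed.

Lemma cond_exp_version_ae_unique Z g1 g2 : cond_exp_version P X Z g1 ->
  cond_exp_version P X Z g2 -> {ae P, forall w, g1 (X w) = g2 (X w)}.
Proof.
move=> [mg1 [ig1 Zg1]] [mg2 [ig2 Zg2]].
pose sgn x : R := if 0 <= g1 x - g2 x then 1 else -1.
have msgn : measurable_fun setT sgn.
  apply: measurable_fun_ifT; [|exact: measurable_cst..].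
  by apply: measurable_fun_ler; [exact: measurable_cst | exact: measurable_funB].
have isgn g : P.-integrable setT (EFin \o (g \o X)) ->
    P.-integrable setT (fun w => (sgn (X w) * g (X w))%:E).
  apply: (integrable_bddM (M := 1)); first exact: measurableT_comp msgn mX.
  by move=> w; rewrite /sgn; case: ifP; rewrite ?normrN normr1.
have sgnE w : (`|(g1 (X w) - g2 (X w))%:E| =
    (sgn (X w) * g1 (X w))%:E - (sgn (X w) * g2 (X w))%:E)%E.
  rewrite -EFinB -mulrBr /sgn /=; case: ifP => [/ger0_norm -> | /negbT].
    by rewrite mul1r.
  by rewrite -ltNge => /ltr0_norm ->; rewrite mulN1r.
have Zg12 B : measurable B -> (\int[P]_(w in X @^-1` B) (g1 (X w))%:E =
    \int[P]_(w in X @^-1` B) (g2 (X w))%:E)%E.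
  by move=> mB; rewrite -Zg1 // Zg2.
have abs0 : (\int[P]_w `|(g1 (X w) - g2 (X w))%:E| = 0)%E.
  under eq_integral do rewrite sgnE.
  rewrite integralB_EFin //; [|exact: isgn..].
  rewrite (eq_integral_comp mX (measurableT_comp mg1 mX) (measurableT_comp mg2 mX)
    ig1 ig2 Zg12 msgn (isgn _ ig1) (isgn _ ig2)).
  by rewrite subee // integrable_fin_num //; exact: isgn.
have mg12 : measurable_fun setT (fun w => (g1 (X w) - g2 (X w))%:E).
  by apply/measurable_EFinP; exact: measurableT_comp (measurable_funB mg1 mg2) mX.
have := (ae_eq_integral_abs P measurableT mg12).1 abs0.
by apply: filterS => w /(_ Logic.I) [] /eqP; rewrite subr_eq0 => /eqP.
Qed.

Lemma cond_exp_versionD Z1 Z2 g1 g2 :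
  P.-integrable setT (EFin \o Z1) -> P.-integrable setT (EFin \o Z2) ->
  cond_exp_version P X Z1 g1 -> cond_exp_version P X Z2 g2 ->
  cond_exp_version P X (fun w => Z1 w + Z2 w) (fun x => g1 x + g2 x).
Proof.
move=> iZ1 iZ2 [mg1 [ig1 Zg1]] [mg2 [ig2 Zg2]].
split; first exact: measurable_funD.
split.
  have := integrableD measurableT ig1 ig2.
  by apply: eq_integrable => // w _ /=; rewrite EFinD.
move=> D mD; have mXD := measurable_preimage mX mD.
under eq_integral do rewrite EFinD; under [RHS]eq_integral do rewrite EFinD.
rewrite !integralD //; try exact: integrableS (subsetT _) _.
by rewrite Zg1 ?Zg2.
Qed.

Lemma cond_exp_versionB Z1 Z2 g1 g2 :
  P.-integrable setT (EFin \o Z1) -> P.-integrable setT (EFin \o Z2) ->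
  cond_exp_version P X Z1 g1 -> cond_exp_version P X Z2 g2 ->
  cond_exp_version P X (fun w => Z1 w - Z2 w) (fun x => g1 x - g2 x).
Proof.
move=> iZ1 iZ2 [mg1 [ig1 Zg1]] [mg2 [ig2 Zg2]].
split; first exact: measurable_funB.
split.
  have := integrableB measurableT ig1 ig2.
  by apply: eq_integrable => // w _ /=; rewrite EFinB.
move=> D mD; have mXD := measurable_preimage mX mD.
rewrite !integralB_EFin //; try exact: integrableS (subsetT _) _.
by rewrite Zg1 ?Zg2.
Qed.

Lemma cond_exp_versionMr Z g (h : Xs -> R) M :
  measurable_fun setT Z -> P.-integrable setT (EFin \o Z) ->
  measurable_fun setT h -> (forall x, `|h x| <= M) ->
  cond_exp_version P X Z g ->
  cond_exp_version P X (fun w => Z w * h (X w)) (fun x => g x * h x).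
Proof.
move=> mZ iZ mh hM [mg [ig Zg]].
have mhX := measurableT_comp mh mX; have mgX := measurableT_comp mg mX.
split; first exact: measurable_funM.
split.
  have := integrable_bddM mhX (fun w => hM (X w)) ig.
  by apply: eq_integrable => // w _ /=; rewrite mulrC.
move=> D mD.
pose phi x := \1_D x * h x.
have mphi : measurable_fun setT phi.
  by apply: measurable_funM => //; exact: measurable_indic.
have phiM x : `|phi x| <= M.
  rewrite /phi indicE; case: (_ \in _); rewrite ?mul1r ?mul0r ?normr0 //.
  exact: le_trans (hM x).
have iphi H : P.-integrable setT (EFin \o H) ->
    P.-integrable setT (fun w => (phi (X w) * H w)%:E).
  exact: integrable_bddM (measurableT_comp mphi mX) (fun w => phiM (X w)).
have phiE H w : (\1_D (X w) * (H w * h (X w)))%:E = (phi (X w) * H w)%:E.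
  by rewrite /phi mulrAC -mulrA.
rewrite -!integral_indic_comp //.
under eq_integral do rewrite phiE.
under [RHS]eq_integral do rewrite /= (phiE (g \o X)).
exact (eq_integral_comp mX mZ mgX iZ ig Zg mphi (iphi _ iZ) (iphi _ ig)).
Qed.

End cond_exp_version.

Section cond_indep.
Context (R : realType) (d : measure_display) (Omega : measurableType d)
  (P : probability Omega R) (dX : measure_display) (Xs : measurableType dX)
  (X : Omega -> Xs).
Hypothesis mX : measurable_fun setT X.

Lemma cond_exp_version_indep_mul (A S : Omega -> R) pA rho :
  measurable_fun setT A -> zero_one A -> measurable_fun setT S -> zero_one S ->
  cond_indep P X A S -> cond_exp_version P X A pA ->
  (forall x, `|pA x| <= 1) -> cond_exp_version P X S rho ->
  cond_exp_version P X (fun w => S w * A w) (fun x => rho x * pA x).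
Proof.
move=> mA A01 mS S01 AS vA pA1 vS.
have [mpA _] := vA; have [mrho [irho _]] := vS.
split; first exact: measurable_funM.
split.
  have := integrable_bddM (measurableT_comp mpA mX) (fun w => pA1 (X w)) irho.
  by apply: eq_integrable => // w _ /=; rewrite mulrC.
move=> D mD.
have [gA [gS [vgA [vgS ASX]]]] := AS _ _ (measurable_set1 1) (measurable_set1 1).
rewrite indic_preimage1 // in vgA; rewrite indic_preimage1 // in vgS.
have [mgA _] := vgA; have [mgS _] := vgS.
have mA1 := measurable_preimage mA (measurable_set1 1).
have mS1 := measurable_preimage mS (measurable_set1 1).
transitivity (\int[P]_(w in X @^-1` D)
    (\1_(A @^-1` [set 1] `&` S @^-1` [set 1]) w)%:E)%E.
  by apply: eq_integral => w _; rewrite indicI !indic_preimage1 // mulrC.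
rewrite integral_indic; [|exact: (measurable_preimage mX)|exact: measurableI].
apply: eq_trans (ASX D mD) _.
apply: (ae_eq_integral_comp mX (f := fun x => gA x * gS x)
  (g := fun x => rho x * pA x)) => //.
- exact: (measurable_preimage mX).
- exact: measurable_funM.
- exact: measurable_funM.
- apply: filterS2 (cond_exp_version_ae_unique mX vgA vA)
    (cond_exp_version_ae_unique mX vgS vS) => w -> ->.
  exact: mulrC.
Qed.

Lemma integral_preimage_cond_indep (d' : measure_display) (T' : measurableType d')
    (U : Omega -> T') (T : Omega -> R) pT B :
  measurable_fun setT U -> measurable_fun setT T -> zero_one T ->
  cond_indep P X U T -> cond_exp_version P X T pT ->
  (forall x, `|pT x| <= 1) -> measurable B ->
  (\int[P]_(w in U @^-1` B) (T w)%:E = \int[P]_(w in U @^-1` B) (pT (X w))%:E)%E.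
Proof.
move=> mU mT T01 UT vT pT1 mB.
have [gU [gT [vgU [vgT UTX]]]] := UT _ _ mB (measurable_set1 1).
rewrite indic_preimage1 // in vgT.
have [mgU [igU gUE]] := vgU; have [mgT _] := vgT; have [mpT _] := vT.
have mUB := measurable_preimage mU mB.
have mT1 := measurable_preimage mT (measurable_set1 1).
transitivity (\int[P]_w (gU (X w) * gT (X w))%:E)%E.
  have UTE := UTX setT measurableT; rewrite preimage_setT setIT in UTE.
  by rewrite -{1}(indic_preimage1 T01) integral_indic // setIC; exact: UTE.
rewrite (ae_eq_integral_comp mX (f := fun x => gU x * gT x)
  (g := fun x => pT x * gU x)) //; first last.
- by apply: filterS (cond_exp_version_ae_unique mX vgT vT) => w ->; rewrite mulrC.
- exact: measurable_funM.
- exact: measurable_funM.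
have ipT H : P.-integrable setT (EFin \o H) ->
    P.-integrable setT (fun w => (pT (X w) * H w)%:E).
  exact: integrable_bddM (measurableT_comp mpT mX) (fun w => pT1 (X w)).
have iUB := @integrable_indic _ _ _ P _ mUB.
rewrite -integral_indic_comp //; symmetry.
under eq_integral do rewrite mulrC.
exact (eq_integral_comp mX (measurable_indic mUB) (measurableT_comp mgU mX)
  iUB igU gUE mpT (ipT _ iUB) (ipT _ igU)).
Qed.

Lemma integral_mul_cond_indep (d' : measure_display) (T' : measurableType d')
    (U : Omega -> T') (f : T' -> R) (T : Omega -> R) pT g :
  measurable_fun setT U -> measurable_fun setT f ->
  P.-integrable setT (EFin \o (f \o U)) ->
  measurable_fun setT T -> zero_one T -> cond_indep P X U T ->
  cond_exp_version P X T pT -> (forall x, `|pT x| <= 1) ->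
  cond_exp_version P X (f \o U) g ->
  (\int[P]_w (T w * f (U w))%:E = \int[P]_w (pT (X w) * g (X w))%:E)%E.
Proof.
move=> mU mf ifU mT T01 UT vT pT1 [mg [ig fUg]].
have [mpT [ipT _]] := vT.
have mpTX := measurableT_comp mpT mX.
have iT := integrable_bdd P mT (zero_one_normr_le1 T01).
have ipTM H : P.-integrable setT (EFin \o H) ->
    P.-integrable setT (fun w => (pT (X w) * H w)%:E).
  exact: integrable_bddM mpTX (fun w => pT1 (X w)).
have ifUM (H : Omega -> R) : measurable_fun setT H -> (forall w, `|H w| <= 1) ->
    P.-integrable setT (fun w => (f (U w) * H w)%:E).
  move=> mH H1; have := integrable_bddM mH H1 ifU.
  by apply: eq_integrable => // w _ /=; rewrite mulrC.
transitivity (\int[P]_w (f (U w) * pT (X w))%:E)%E.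
  under eq_integral do rewrite mulrC.
  exact (eq_integral_comp mU mT mpTX iT ipT
    (fun B mB => integral_preimage_cond_indep mU mT T01 UT vT pT1 mB) mf
    (ifUM _ mT (zero_one_normr_le1 T01)) (ifUM _ mpTX (fun w => pT1 (X w)))).
under eq_integral do rewrite mulrC.
exact (eq_integral_comp mX (measurableT_comp mf mU) (measurableT_comp mg mX)
  ifU ig fUg mpT (ipTM _ ifU) (ipTM _ ig)).
Qed.

End cond_indep.

Lemma Astar01 (R : realType) (Omega Xs : Type) (X : Omega -> Xs) (r : Xs -> R)
    (S A : Omega -> R) :
  zero_one r -> zero_one S -> zero_one A -> zero_one (Astar X r S A).
Proof.
move=> r01 S01 A01 w; rewrite /Astar.
case: (S01 w) => ->; rewrite ?(mul0r, mul1r, subr0, subrr, add0r, addr0).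
  exact: A01.
exact: r01.
Qed.

Lemma measurable_Astar (R : realType) (d dX : measure_display)
    (Omega : measurableType d) (Xs : measurableType dX) (X : Omega -> Xs)
    (r : Xs -> R) (S A : Omega -> R) :
  measurable_fun setT X -> measurable_fun setT r ->
  measurable_fun setT S -> measurable_fun setT A ->
  measurable_fun setT (Astar X r S A).
Proof.
move=> mX mr mS mA; apply: measurable_funD; apply: measurable_funM => //.
  exact: measurableT_comp mr mX.
by apply: measurable_funB => //; exact: measurable_cst.
Qed.

Section implementation.
Context (R : realType) (d : measure_display) (Omega : measurableType d)
  (P : probability Omega R) (dX : measure_display) (Xs : measurableType dX)
  (X : Omega -> Xs).
Hypothesis mX : measurable_fun setT X.

Lemma cond_exp_version_Astar (r : Xs -> R) (S A : Omega -> R) pi rho :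
  measurable_fun setT r -> zero_one r -> measurable_fun setT S -> zero_one S ->
  measurable_fun setT A -> zero_one A -> cond_indep P X A S ->
  cond_exp_version P X A pi -> (forall x, `|pi x| <= 1) ->
  cond_exp_version P X S rho ->
  cond_exp_version P X (Astar X r S A)
    (fun x => rho x * r x + pi x - rho x * pi x).
Proof.
move=> mr r01 mS S01 mA A01 AS vA pi1 vS.
have mSr : measurable_fun setT (fun w => S w * r (X w)).
  by apply: measurable_funM => //; exact: measurableT_comp mr mX.
have Sr1 w : `|S w * r (X w)| <= 1.
  by rewrite normrM mulr_ile1 ?zero_one_normr_le1.
have SA1 w : `|S w * A w| <= 1.
  by rewrite normrM mulr_ile1 ?zero_one_normr_le1.
have SrA2 w : `|S w * r (X w) + A w| <= 2.
  apply: le_trans (ler_normD _ _) _; rewrite -[2]/(1 + 1).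
  exact: lerD (Sr1 w) (zero_one_normr_le1 A01 w).
have -> : Astar X r S A = (fun w => S w * r (X w) + A w - S w * A w).
  by apply/funext => w; rewrite /Astar; ring.
apply: (cond_exp_versionB mX).
- by apply: (integrable_bdd _ _ SrA2); exact: measurable_funD.
- by apply: (integrable_bdd _ _ SA1); exact: measurable_funM.
- apply: (cond_exp_versionD mX) => //.
  + by apply: integrable_bdd mSr Sr1.
  + exact: integrable_bdd _ mA (zero_one_normr_le1 A01).
  + apply: (cond_exp_versionMr mX (M := 1)) => //.
      exact: integrable_bdd _ mS (zero_one_normr_le1 S01).
    exact: zero_one_normr_le1.
- exact (cond_exp_version_indep_mul mX mA A01 mS S01 AS vA pi1 vS).
Qed.

Variables (Y1 Y0 : Omega -> R) (tau : Xs -> R).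
Hypotheses (mY1 : measurable_fun setT Y1) (mY0 : measurable_fun setT Y0).
Hypotheses (iY1 : P.-integrable setT (EFin \o Y1))
           (iY0 : P.-integrable setT (EFin \o Y0)).
Hypothesis vtau : cond_exp_version P X (fun w => Y1 w - Y0 w) tau.

Let iY : P.-integrable setT (EFin \o (fun w => Y1 w - Y0 w)).
Proof.
have := integrableB measurableT iY1 iY0.
by apply: eq_integrable => // w _ /=; rewrite EFinB.
Qed.

Let itau : P.-integrable setT (EFin \o (tau \o X)).
Proof. by case: vtau => _ []. Qed.

Lemma integral_treatment_effect T pT :
  measurable_fun setT T -> zero_one T ->
  cond_indep P X (fun w => (Y1 w, Y0 w)) T ->
  cond_exp_version P X T pT -> (forall x, `|pT x| <= 1) ->
  (\int[P]_w (T w * (Y1 w - Y0 w))%:E = \int[P]_w (pT (X w) * tau (X w))%:E)%E.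
Proof.
move=> mT T01 YT vT pT1.
have mf : measurable_fun setT (fun u : R * R => u.1 - u.2).
  by apply: measurable_funB; [exact: measurable_fst | exact: measurable_snd].
exact: (integral_mul_cond_indep mX (measurable_fun_pair mY1 mY0) mf iY mT T01
  YT vT pT1 vtau).
Qed.

Lemma integral_rule_effect (r : Xs -> R) M :
  measurable_fun setT r -> (forall x, `|r x| <= M) ->
  (\int[P]_w (r (X w) * (Y1 w - Y0 w))%:E = \int[P]_w (r (X w) * tau (X w))%:E)%E.
Proof.
move=> mr rM; have [mtau [_ Ytau]] := vtau.
have mrX := measurableT_comp mr mX.
exact (eq_integral_comp mX (measurable_funB mY1 mY0) (measurableT_comp mtau mX)
  iY itau Ytau mr (integrable_bddM mrX (fun w => rM (X w)) iY)
  (integrable_bddM mrX (fun w => rM (X w)) itau)).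
Qed.

Lemma integral_outcomeB (T1 T2 : Omega -> R) (p1 p2 : Xs -> R) :
  measurable_fun setT T1 -> (forall w, `|T1 w| <= 1) ->
  measurable_fun setT T2 -> (forall w, `|T2 w| <= 1) ->
  measurable_fun setT p1 -> (forall x, `|p1 x| <= 1) ->
  measurable_fun setT p2 -> (forall x, `|p2 x| <= 1) ->
  (\int[P]_w (T1 w * (Y1 w - Y0 w))%:E = \int[P]_w (p1 (X w) * tau (X w))%:E)%E ->
  (\int[P]_w (T2 w * (Y1 w - Y0 w))%:E = \int[P]_w (p2 (X w) * tau (X w))%:E)%E ->
  (\int[P]_w (outcome T1 Y1 Y0 w - outcome T2 Y1 Y0 w)%:E
    = \int[P]_w ((p1 (X w) - p2 (X w)) * tau (X w))%:E)%E.
Proof.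
move=> mT1 T11 mT2 T21 mp1 p11 mp2 p21 T1E T2E.
have ip (p : Xs -> R) : measurable_fun setT p -> (forall x, `|p x| <= 1) ->
    P.-integrable setT (fun w => (p (X w) * tau (X w))%:E).
  move=> mp p_le1.
  exact: integrable_bddM (measurableT_comp mp mX) (fun w => p_le1 (X w)) itau.
transitivity
  (\int[P]_w ((T1 w * (Y1 w - Y0 w))%:E - (T2 w * (Y1 w - Y0 w))%:E))%E.
  by apply: eq_integral => w _; rewrite -EFinB /outcome; congr (_%:E); ring.
rewrite integralB_EFin //; [|exact: integrable_bddM iY..].
rewrite T1E T2E -integralB_EFin //; [|exact: ip..].
by apply: eq_integral => w _; rewrite -EFinB mulrBl.
Qed.

Lemma integral_pistar_decomposition (r pi pistar rho : Xs -> R) :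
  measurable_fun setT r -> measurable_fun setT pi ->
  measurable_fun setT pistar -> measurable_fun setT rho ->
  {ae P, forall w,
    pistar (X w) = rho (X w) * r (X w) + pi (X w) - rho (X w) * pi (X w)} ->
  (\int[P]_w ((pistar (X w) - pi (X w)) * tau (X w))%:E
    = \int[P]_w (rho (X w) * (r (X w) - pi (X w)) * tau (X w))%:E)%E /\
  (\int[P]_w ((r (X w) - pistar (X w)) * tau (X w))%:E
    = \int[P]_w ((1 - rho (X w)) * (r (X w) - pi (X w)) * tau (X w))%:E)%E.
Proof.
move=> mr mpi mpistar mrho pistarE; have [mtau _] := vtau.
have mtauM (h : Xs -> R) :
    measurable_fun setT h -> measurable_fun setT (fun x => h x * tau x).
  by move=> mh; exact: measurable_funM.
have mrpi := measurable_funB mr mpi.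
split.
- apply: (ae_eq_integral_comp mX measurableT
    (mtauM _ (measurable_funB mpistar mpi))
    (mtauM _ (measurable_funM mrho mrpi))).
  by apply: filterS pistarE => w /= ->; ring.
- have m1rho : measurable_fun setT (fun x => 1 - rho x).
    by apply: measurable_funB => //; exact: measurable_cst.
  apply: (ae_eq_integral_comp mX measurableT
    (mtauM _ (measurable_funB mr mpistar))
    (mtauM _ (measurable_funM m1rho mrpi))).
  by apply: filterS pistarE => w /= ->; ring.
Qed.

End implementation.

Unset Implicit Arguments.
Theorem mainTheorem3 (R : realType) (d : measure_display)
  (Omega : measurableType d) (P : probability Omega R)
  (dX : measure_display) (Xs : measurableType dX) (X : Omega -> Xs)
  (r : Xs -> R) (A S Y1 Y0 : Omega -> R) (pi pistar rhostar tau : Xs -> R) :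
  measurable_fun setT X ->
  measurable_fun setT r -> (forall x, r x = 0 \/ r x = 1) ->
  measurable_fun setT A -> (forall w, A w = 0 \/ A w = 1) ->
  measurable_fun setT S -> (forall w, S w = 0 \/ S w = 1) ->
  measurable_fun setT Y1 -> measurable_fun setT Y0 ->
  P.-integrable setT (EFin \o Y1) -> P.-integrable setT (EFin \o Y0) ->
  cond_indep P X (fun w => (Y1 w, Y0 w)) A ->
  cond_indep P X (fun w => (Y1 w, Y0 w)) (Astar X r S A) ->
  cond_indep P X A S ->
  cond_exp_version P X A pi ->
  cond_exp_version P X (Astar X r S A) pistar ->
  cond_exp_version P X S rhostar ->
  cond_exp_version P X (fun w => Y1 w - Y0 w) tau ->
  (forall x, 0 < pi x < 1) ->
  (forall x, 0 < pistar x < 1) ->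
  let Ystar := outcome (Astar X r S A) Y1 Y0 in
  let Ys0 := outcome A Y1 Y0 in
  let Ys1 := outcome (fun w => r (X w)) Y1 Y0 in
  [/\ (\int[P]_w (Ystar w - Ys0 w)%:E
        = \int[P]_w ((pistar (X w) - pi (X w)) * tau (X w))%:E)%E,
      (\int[P]_w ((pistar (X w) - pi (X w)) * tau (X w))%:E
        = \int[P]_w (rhostar (X w) * (r (X w) - pi (X w)) * tau (X w))%:E)%E,
      (\int[P]_w (Ys1 w - Ystar w)%:E
        = \int[P]_w ((r (X w) - pistar (X w)) * tau (X w))%:E)%E &
      (\int[P]_w ((r (X w) - pistar (X w)) * tau (X w))%:E
        = \int[P]_w ((1 - rhostar (X w)) * (r (X w) - pi (X w)) * tau (X w))%:E)%E].
Proof.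
move=> mX mr r01 mA A01 mS S01 mY1 mY0 iY1 iY0 YA YAs AS vA vAs vS vtau
  pi01 ps01 Ystar Ys0 Ys1.
have pi1 := open_unit_normr_le1 pi01; have ps1 := open_unit_normr_le1 ps01.
have r1 := zero_one_normr_le1 r01.
have [mpi _] := vA; have [mps _] := vAs; have [mrho _] := vS.
have As01 := Astar01 X r01 S01 A01; have mAs := measurable_Astar mX mr mS mA.
have kA := integral_treatment_effect mX mY1 mY0 iY1 iY0 vtau mA A01 YA vA pi1.
have kAs :=
  integral_treatment_effect mX mY1 mY0 iY1 iY0 vtau mAs As01 YAs vAs ps1.
have kr := integral_rule_effect mX mY1 mY0 iY1 iY0 vtau mr r1.
have pistarE := cond_exp_version_ae_unique mX vAs
  (cond_exp_version_Astar mX mr r01 mS S01 mA A01 AS vA pi1 vS).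
have [pistar_pi r_pistar] :=
  integral_pistar_decomposition mX vtau mr mpi mps mrho pistarE.
split=> //.
- exact (integral_outcomeB mX iY1 iY0 vtau mAs (zero_one_normr_le1 As01)
    mA (zero_one_normr_le1 A01) mps ps1 mpi pi1 kAs kA).
- exact (integral_outcomeB mX iY1 iY0 vtau (measurableT_comp mr mX)
    (fun w => r1 (X w)) mAs (zero_one_normr_le1 As01) mr r1 mps ps1 kr kAs).
Qed.
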